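(* Fix any ordering $e_1,\dots,e_n$ of $V$, and let $S_L$ be the set of elements selected by Algorithm 3 among the positions $i\le\beta n$. Suppose $f(S_L)\ge\alpha\,\mathrm{OPT}$ with $\alpha=3\cdot10^{-3}$, and $0.9\beta k\le|\mathcal O_L|\le1.1\beta k$, where $\mathcal O_L$ is the set of elements of $\mathcal O$ at positions $i\le\beta n$. Then the output $S$ of Algorithm 3 satisfies $f(S)\ge(0.5+9\cdot10^{-12})\mathrm{OPT}$.
   Context: $V$ is a finite ground set with $|V|=n$; $f:2^V\to\mathbb{R}_{\ge0}$ is monotone, submodular and normalized; $f(X\mid Y)=f(X\cup Y)-f(Y)$, $f(e\mid Y)=f(\{e\}\mid Y)$. $k\le n$ is a positive integer, $\mathrm{OPT}=\max\{f(S):S\subseteq V,|S|\le k\}$, and $\mathcal O$ is a fixed set with $|\mathcal O|=k$, $f(\mathcal O)=\mathrm{OPT}$. Algorithm 3 (knows $\mathrm{OPT}$), with $\beta=10^{-3}$, $\epsilon=10^{-8}$, $\delta=3\cdot10^{-11}$: start with $S=\emptyset$; for $i=1,\dots,n$, add $e_i$ to $S$ if $|S|<k$ and either ($i\le\beta n$ and $f(e_i\mid S)\ge\frac{1+\epsilon}{2}\cdot\frac{\mathrm{OPT}}{k}$) or ($i>\beta n$ and $f(e_i\mid S)\ge\frac{1-\delta}{2}\cdot\frac{\mathrm{OPT}}{k}$); return $S$. *)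

From HB Require Import structures.
From mathcomp Require Import all_boot all_order all_algebra.
Set Implicit Arguments. Unset Strict Implicit. Unset Printing Implicit Defensive.
Import Order.TTheory GRing.Theory Num.Theory.
Local Open Scope ring_scope.

Section Defs.
Variables (T : finType) (R : realFieldType).

Definition monotone_set_fun (f : {set T} -> R) : Prop :=
  forall A B : {set T}, A \subset B -> f A <= f B.

Definition submodular (f : {set T} -> R) : Prop :=
  forall A B : {set T}, f (A :|: B) + f (A :&: B) <= f A + f B.

Definition normalized (f : {set T} -> R) : Prop := f set0 = 0.

Definition nonneg_set_fun (f : {set T} -> R) : Prop := forall A, 0 <= f A.

Definition marg (f : {set T} -> R) (e : T) (S : {set T}) : R := f (e |: S) - f S.

Definition OPT (f : {set T} -> R) (k : nat) : R :=
  \big[Num.max/0]_(S : {set T} | (#|S| <= k)%N) f S.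

Definition beta : R := (1000%:R)^-1.
Definition eps : R := (10%:R ^+ 8)^-1.
Definition delta : R := 3%:R / 10%:R ^+ 11.
Definition alpha : R := 3%:R / 1000%:R.

(* one step of Algorithm 3 at (1-indexed) position i, with n = |V| *)
Definition alg3_accept (f : {set T} -> R) (k n : nat) (opt : R)
    (i : nat) (e : T) (S : {set T}) : bool :=
  (#|S| < k)%N &&
  (((i%:R <= beta * n%:R) && ((1 + eps) / 2%:R * (opt / k%:R) <= marg f e S))
   || ((beta * n%:R < i%:R) && ((1 - delta) / 2%:R * (opt / k%:R) <= marg f e S))).

Fixpoint alg3_run (f : {set T} -> R) (k n : nat) (opt : R)
    (i : nat) (s : seq T) (S : {set T}) : {set T} :=
  match s with
  | [::] => S
  | e :: s' =>
      alg3_run f k n opt i.+1 s'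
        (if alg3_accept f k n opt i e S then e |: S else S)
  end.

Definition alg3 (f : {set T} -> R) (k : nat) (s : seq T) : {set T} :=
  alg3_run f k (size s) (OPT f k) 1 s set0.

Definition early_part (s : seq T) (A : {set T}) : {set T} :=
  [set x in A | ((index x s).+1%:R <= beta * (size s)%:R :> R)].

End Defs.

From HB Require Import structures.
From mathcomp Require Import all_boot all_order all_algebra.
From mathcomp Require Import lra zify.
Import Order.TTheory GRing.Theory Num.Theory.
Set Implicit Arguments. Unset Strict Implicit. Unset Printing Implicit Defensive.
Local Open Scope ring_scope.

(* Up to position beta n, Algorithm 3 is a threshold greedy with threshold
   t1 = (1 + eps)/2 * OPT/k, afterwards with t2 = (1 - delta)/2 * OPT/k.
   If it stops with k elements, every element paid for its threshold, so
   f S >= f S_L + t2 (k - |S_L|) with f S_L >= t1 |S_L| and f S_L >= alpha OPT;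
   either bound on f S_L beats OPT/2, according as |S_L| is large or small.
   Otherwise each element of O outside S was rejected, hence by submodularity
   its marginal gain on S is below the threshold of its position, and
   OPT <= f S + t1 |O_L| + t2 (k - |O_L|); as |O_L| <= 1.1 beta k, the surplus
   delta/2 of t2 outweighs the excess eps/2 of t1. *)

Lemma real_threshold_prefix (R : realDomainType) (c : R) (n : nat) :
  exists2 m, (m <= n)%N & forall j, (j < n)%N -> (j.+1%:R <= c) = (j < m)%N.
Proof.
elim: n => [|n [m mn prefix]]; first by exists 0%N.
have m_full : (m < n)%N -> ~~ (n.+1%:R <= c).
  move=> mn'; apply/negP => cn; have := prefix m mn'.
  by rewrite ltnn (le_trans _ cn) // ler_nat ltnS ltnW.
have [cn|cn] := boolP (n.+1%:R <= c); last first.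
  exists m => [|j]; first exact: leqW.
  rewrite ltnS leq_eqVlt => /orP[/eqP-> | /prefix //].
  by rewrite (negbTE cn) ltnNge mn.
have m_eq : m = n by apply/eqP; rewrite eqn_leq mn leqNgt (contraL m_full cn).
exists n.+1 => // j; rewrite ltnS => jn; rewrite jn.
by move: jn; rewrite leq_eqVlt => /orP[/eqP-> // | jn]; rewrite prefix // m_eq jn.
Qed.

Section Submodular.
Variables (T : finType) (R : realFieldType) (f : {set T} -> R).
Hypotheses (f_mono : monotone_set_fun f) (f_submod : submodular f).

Lemma marg_ge0 e (S : {set T}) : 0 <= marg f e S.
Proof. by rewrite /marg subr_ge0; apply/f_mono/subsetUr. Qed.

Lemma marg_le_subset e (A B : {set T}) : A \subset B -> marg f e B <= marg f e A.
Proof.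
move=> AB; have [eB|eB] := boolP (e \in B).
  by rewrite /marg (setUidPr _) ?sub1set // subrr -/(marg f e A) marg_ge0.
have := f_submod (e |: A) B.
have -> : (e |: A) :|: B = e |: B by rewrite -setUA (setUidPr AB).
have -> : (e |: A) :&: B = A.
  by rewrite setIUl (setIidPl AB) (_ : [set e] :&: B = set0) ?set0U // disjoint_setI0 ?disjoints1.
rewrite /marg; lra.
Qed.

Lemma f_setU_le_sum_marg (S A : {set T}) :
  f (S :|: A) <= f S + \sum_(x in A) marg f x S.
Proof.
rewrite -big_enum -[in X in f (_ :|: X)](set_enum A) /=.
elim: (enum A) => [|x r IH].
  by rewrite big_nil addr0 (_ : [set x in [::]] = set0) ?setU0 //; apply/setP=> y; rewrite !inE.
have -> : S :|: [set y in x :: r] = x |: (S :|: [set y in r]).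
  by apply/setP=> y; rewrite !inE orbCA.
have := marg_le_subset x (subsetUl S [set y in r]).
rewrite big_cons /marg in IH *; lra.
Qed.

End Submodular.

Section ThresholdRun.
Variables (T : finType) (R : realFieldType) (f : {set T} -> R) (k n : nat) (opt : R).
Hypotheses (f_mono : monotone_set_fun f) (f_submod : submodular f).
Local Notation run := (alg3_run f k n opt).

Lemma alg3_run_cat i s1 s2 (S : {set T}) :
  run i (s1 ++ s2) S = run (i + size s1) s2 (run i s1 S).
Proof. by elim: s1 i S => [|x s1 IH] i S /=; rewrite ?addn0 // IH addSnnS. Qed.

Lemma alg3_run_sub i s (S : {set T}) : S \subset run i s S.
Proof.
elim: s i S => [|x s IH] i S /=; first exact: subxx.
by apply: subset_trans (IH _ _); case: ifP => _; [exact: subsetUr | exact: subxx].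
Qed.

Lemma mem_alg3_run i s (S : {set T}) x : x \in run i s S -> (x \in S) || (x \in s).
Proof.
elim: s i S => [|y s IH] i S /=; first by move->.
move=> /IH /orP[|xs]; last by rewrite inE xs !orbT.
case: ifP => _; last by move->.
by rewrite !inE => /orP[->|->]; rewrite ?orbT.
Qed.

Lemma card_alg3_run i s (S : {set T}) : (#|S| <= k)%N -> (#|run i s S| <= k)%N.
Proof.
elim: s i S => [|y s IH] i S //= hS; apply: IH.
by case: ifP => // /andP[hk _]; rewrite cardsU1; case: (y \in S) => /=; lia.
Qed.

Definition threshold_segment (i : nat) (s : seq T) (tau : R) :=
  forall j e (S : {set T}), (i <= j < i + size s)%N ->
    alg3_accept f k n opt j e S = (#|S| < k)%N && (tau <= marg f e S).

Lemma threshold_segment_behead i x s tau :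
  threshold_segment i (x :: s) tau -> threshold_segment i.+1 s tau.
Proof. by move=> thr j e S /andP[ij jlt]; apply: thr; rewrite /= -addSnnS ltnW. Qed.

Lemma alg3_run_gain i s (S : {set T}) tau : threshold_segment i s tau ->
  f S + tau * (#|run i s S|%:R - #|S|%:R) <= f (run i s S).
Proof.
elim: s i S => [|y s IH] i S thr /=; first by rewrite subrr mulr0 addr0.
have := IH i.+1 (if alg3_accept f k n opt i y S then y |: S else S)
  (threshold_segment_behead thr).
rewrite (thr i) ?leqnn ?addnS ?ltnS ?leq_addr //.
case: ifP => [/andP[_ gain]|_ //]; rewrite cardsU1.
have [yS|yS] := boolP (y \in S); first by rewrite (setUidPr _) ?sub1set // add0n.
by move: gain; rewrite /marg natrD /=; lra.
Qed.

Lemma alg3_run_reject i s (S : {set T}) tau x : threshold_segment i s tau ->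
  x \in s -> x \notin run i s S -> (#|run i s S| < k)%N -> marg f x (run i s S) < tau.
Proof.
elim: s i S => [|y s IH] i S //= thr.
rewrite inE => /orP[/eqP-> | xs]; last exact: IH (threshold_segment_behead thr) xs.
have sub_run := alg3_run_sub i.+1 s.
case acc: (alg3_accept f k n opt i y S) => y_out not_full.
  by rewrite (subsetP (sub_run _)) ?setU11 in y_out.
have S_not_full : (#|S| < k)%N by apply: leq_ltn_trans not_full; apply/subset_leq_card.
move: acc; rewrite (thr i) ?leqnn ?addnS ?ltnS ?leq_addr // S_not_full /= => /negbT.
by rewrite -ltNge; apply: le_lt_trans; apply: marg_le_subset.
Qed.

End ThresholdRun.

Section Constants.
Variable R : realFieldType.

Lemma eps_gt0 : 0 < eps R.
Proof. by rewrite invr_gt0 exprn_gt0 // ltr0n. Qed.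

Let pow10_4 : 10000%:R = 10%:R ^+ 4 :> R. Proof. by rewrite -natrX. Qed.
Let pow10_3 : 1000%:R = 10%:R ^+ 3 :> R. Proof. by rewrite -natrX. Qed.

Lemma eps_1e8 : eps R * (10000%:R * 10000%:R) = 1.
Proof. by rewrite pow10_4 -exprD mulVf // expf_neq0 // pnatr_eq0. Qed.

Lemma deltaE : delta R = 3%:R * (eps R / 1000%:R).
Proof. by rewrite /delta /eps pow10_3 -invfM -exprD. Qed.

Lemma gain_constE : 9%:R / 10%:R ^+ 12 = 9%:R * (eps R / 10000%:R) :> R.
Proof. by rewrite /eps pow10_4 -invfM -exprD. Qed.

Lemma delta_le1 : delta R <= 1.
Proof. by have := eps_gt0; have := eps_1e8; rewrite deltaE; lra. Qed.

End Constants.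

Section Arithmetic.
Variable R : realFieldType.
Implicit Types u K a b fSL fS : R.

Lemma full_run_bound u K a fSL fS : 0 <= u -> 0 <= a <= K ->
  (1 + eps R) / 2%:R * u * a <= fSL ->
  fSL + (1 - delta R) / 2%:R * u * (K - a) <= fS ->
  alpha R * (K * u) <= fSL ->
  (1 / 2%:R + 9%:R / 10%:R ^+ 12) * (K * u) <= fS.
Proof.
move=> u0 /andP[a0 aK] early late alpha_bound.
rewrite gain_constE; rewrite deltaE in late; rewrite /alpha in alpha_bound.
have := eps_1e8 R; have := eps_gt0 R; set z := eps R in early late * => z0 z1e8.
have zua : 0 <= z * (u * a) by apply: mulr_ge0; [exact: ltW | exact: mulr_ge0].
have uK : 0 <= u * K by rewrite mulr_ge0 // (le_trans a0).
have [a_small|a_large] := lerP (200%:R * a) K.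
  have uKa : 0 <= u * (K / 200%:R - a) by rewrite mulr_ge0 //; lra.
  have zuKa : 0 <= z * (u * (K / 200%:R - a)) by rewrite mulr_ge0 //; lra.
  have zuK : 0 <= (1 / 10000%:R - z) * (u * K) by rewrite mulr_ge0 ?mulr_ge0 //; lra.
  lra.
have uKa : 0 <= u * (a - K / 200%:R) by rewrite mulr_ge0 //; lra.
have zuKa : 0 <= z * (u * (a - K / 200%:R)) by rewrite mulr_ge0 //; lra.
lra.
Qed.

Lemma partial_run_bound u K b fS : 0 <= u -> 0 <= b <= 11%:R / 10%:R * beta R * K ->
  K * u <= fS + ((1 + eps R) / 2%:R * u * b + (1 - delta R) / 2%:R * u * (K - b)) ->
  (1 / 2%:R + 9%:R / 10%:R ^+ 12) * (K * u) <= fS.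
Proof.
move=> u0 /andP[b0 b_le] opt_bound.
rewrite gain_constE; rewrite deltaE in opt_bound; rewrite /beta in b_le.
have := eps_gt0 R; set z := eps R in opt_bound * => z0.
have K0 : 0 <= K by lra.
have ub : 0 <= u * (11%:R / 10%:R * (1000%:R)^-1 * K - b) by rewrite mulr_ge0 //; lra.
have zub : 0 <= z * (u * (11%:R / 10%:R * (1000%:R)^-1 * K - b)) by rewrite mulr_ge0 //; lra.
have zuK : 0 <= z * (u * K) by apply: mulr_ge0; [exact: ltW | exact: mulr_ge0].
have zub' : 0 <= z * (u * b) by apply: mulr_ge0; [exact: ltW | exact: mulr_ge0].
lra.
Qed.

End Arithmetic.

Lemma early_part_sub (T : finType) (R : realFieldType) (s : seq T) (A : {set T}) :
  early_part R s A \subset A.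
Proof. by apply/subsetP => x; rewrite inE => /andP[]. Qed.

Section Alg3Split.
Variables (T : finType) (R : realFieldType) (f : {set T} -> R) (k : nat) (s : seq T) (m : nat).
Hypotheses (f_mono : monotone_set_fun f) (f_submod : submodular f).
Hypothesis m_le : (m <= size s)%N.
Hypothesis early_prefix : forall j, (j < size s)%N ->
  (j.+1%:R <= beta R * (size s)%:R :> R) = (j < m)%N.

Local Notation run := (alg3_run f k (size s) (OPT f k)).
Local Notation tau1 := ((1 + eps R) / 2%:R * (OPT f k / k%:R)).
Local Notation tau2 := ((1 - delta R) / 2%:R * (OPT f k / k%:R)).
Local Notation SL := (run 1 (take m s) set0).

Lemma threshold_segment_early : threshold_segment f k (size s) (OPT f k) 1 (take m s) tau1.
Proof.
move=> j e X; rewrite size_takel // => /andP[j_pos j_le].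
have early : j%:R <= beta R * (size s)%:R by rewrite -(prednK j_pos) early_prefix; lia.
by rewrite /alg3_accept early ltNge early /= orbF.
Qed.

Lemma threshold_segment_late : threshold_segment f k (size s) (OPT f k) (1 + m) (drop m s) tau2.
Proof.
move=> j e X; rewrite size_drop => /andP[j_ge j_le].
have late : (j%:R <= beta R * (size s)%:R) = false.
  by rewrite -(prednK (_ : 0 < j)%N) ?early_prefix; lia.
by rewrite /alg3_accept late ltNge late.
Qed.

Lemma alg3_split : alg3 f k s = run (1 + m) (drop m s) SL.
Proof.
by rewrite /alg3 -[X in alg3_run _ _ _ _ _ X _](cat_take_drop m s) alg3_run_cat size_takel.
Qed.

Lemma early_run_sub_alg3 : SL \subset alg3 f k s.
Proof. by rewrite alg3_split; apply: alg3_run_sub. Qed.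

Lemma mem_early_part (A : {set T}) x : x \in s ->
  (x \in early_part R s A) = (x \in A) && (x \in take m s).
Proof. by move=> xs; rewrite inE in_take // early_prefix ?index_mem. Qed.

Lemma early_part_alg3 : uniq s -> early_part R s (alg3 f k s) = SL.
Proof.
move=> s_uniq.
have SL_s x : x \in SL -> x \in s by move/mem_alg3_run; rewrite inE => /mem_take.
have take_drop x : x \in take m s -> x \in drop m s = false.
  move: s_uniq; rewrite -{1}(cat_take_drop m s) cat_uniq => /and3P[_ /hasPn disj _] x1.
  by apply/negbTE/negP => /disj; rewrite x1.
apply/setP=> x; rewrite alg3_split; apply/idP/idP => [xL | xSL].
  have xs : x \in s.
    by move: xL; rewrite inE => /andP[/mem_alg3_run/orP[/SL_s|/mem_drop]].
  move: xL; rewrite mem_early_part // => /andP[/mem_alg3_run/orP[// | x2] x1].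
  by rewrite take_drop in x2.
rewrite -alg3_split mem_early_part ?SL_s // (subsetP early_run_sub_alg3) //=.
by have /orP[] := mem_alg3_run xSL; rewrite ?inE.
Qed.

Lemma marg_alg3_lt_threshold x :
  (#|alg3 f k s| < k)%N -> x \in s -> x \notin alg3 f k s ->
  marg f x (alg3 f k s) < if x \in take m s then tau1 else tau2.
Proof.
move=> not_full xs xS; case: ifP => x1.
  have SL_sub := early_run_sub_alg3.
  apply: le_lt_trans (marg_le_subset f_mono f_submod x SL_sub) _.
  apply: alg3_run_reject threshold_segment_early x1 _ _ => //.
    by apply: contra xS; apply/subsetP.
  exact: leq_ltn_trans (subset_leq_card SL_sub) not_full.
rewrite alg3_split in not_full xS *.
have x2 : x \in drop m s by move: xs; rewrite -[s in x \in s](cat_take_drop m s) mem_cat x1.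
exact: alg3_run_reject threshold_segment_late x2 xS not_full.
Qed.

Lemma alg3_partial_gain (O : {set T}) : (forall x, x \in s) -> 0 <= OPT f k ->
  (#|alg3 f k s| < k)%N ->
  f O <= f (alg3 f k s) +
         (tau1 * #|early_part R s O|%:R + tau2 * (#|O|%:R - #|early_part R s O|%:R)).
Proof.
move=> s_full opt_ge0 not_full; set S := alg3 f k s; set OL := early_part R s O.
have marg_le x : marg f x S <= if x \in take m s then tau1 else tau2.
  have [xS|xS] := boolP (x \in S); last exact/ltW/marg_alg3_lt_threshold.
  rewrite /marg (setUidPr _) ?sub1set // subrr.
  have := eps_gt0 R; have := delta_le1 R; have : 0 <= OPT f k / k%:R by rewrite divr_ge0.
  by case: ifP => _ *; rewrite mulr_ge0 // divr_ge0 //; lra.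
have OL_sub : OL \subset O := early_part_sub R s O.
have sum_thr : \sum_(x in O) (if x \in take m s then tau1 else tau2) =
               tau1 * #|OL|%:R + tau2 * (#|O|%:R - #|OL|%:R).
  rewrite (big_setID OL) /= (setIidPr OL_sub).
  rewrite (eq_bigr (fun=> tau1)); last by move=> x; rewrite mem_early_part // => /andP[_ ->].
  rewrite [X in _ + X](eq_bigr (fun=> tau2)); last first.
    by move=> x /setDP[xO]; rewrite mem_early_part // xO /= => /negbTE ->.
  by rewrite !sumr_const cardsD (setIidPr OL_sub) -natrB ?subset_leq_card // !mulr_natr.
rewrite -sum_thr; apply: le_trans (f_mono (subsetUr S O)) _.
apply: le_trans (f_setU_le_sum_marg f_mono f_submod S O) _.
by rewrite lerD2l; apply: ler_sum => x _; apply: marg_le.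
Qed.

Lemma alg3_early_late_gains : normalized f -> uniq s ->
  let SL := early_part R s (alg3 f k s) in
  tau1 * #|SL|%:R <= f SL /\
  f SL + tau2 * (#|alg3 f k s|%:R - #|SL|%:R) <= f (alg3 f k s).
Proof.
move=> f0 s_uniq /=; rewrite early_part_alg3 //; split.
  by have := alg3_run_gain set0 threshold_segment_early; rewrite f0 cards0 subr0 add0r.
by rewrite alg3_split; apply: alg3_run_gain threshold_segment_late.
Qed.

End Alg3Split.

Theorem mainTheorem8 (T : finType) (R : realFieldType) (f : {set T} -> R)
    (k : nat) (O : {set T}) (s : seq T) :
  nonneg_set_fun f -> monotone_set_fun f -> submodular f -> normalized f ->
  (0 < k)%N -> (k <= #|T|)%N ->
  #|O| = k -> f O = OPT f k ->
  uniq s -> (forall x : T, x \in s) ->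
  let S := alg3 f k s in
  let SL := early_part R s S in
  let OL := early_part R s O in
  alpha R * OPT f k <= f SL ->
  9%:R / 10%:R * beta R * k%:R <= #|OL|%:R ->
  #|OL|%:R <= 11%:R / 10%:R * beta R * k%:R ->
  (1 / 2%:R + 9%:R / 10%:R ^+ 12) * OPT f k <= f S.
Proof.
move=> f_ge0 f_mono f_submod f0 k_gt0 _ cardO fO s_uniq s_full S SL OL alpha_SL _ OL_le.
(* The early positions 1, ..., m form a prefix of the ordering. *)
have [m m_le early_prefix] := real_threshold_prefix (beta R * (size s)%:R) (size s).
have opt_ge0 : 0 <= OPT f k by rewrite -fO; apply: f_ge0.
set u := OPT f k / k%:R.
have opt_ku : OPT f k = k%:R * u by rewrite mulrC divfK // pnatr_eq0 -lt0n.
have u_ge0 : 0 <= u by rewrite divr_ge0.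
rewrite opt_ku in alpha_SL *.
have [not_full | S_full] := ltnP #|S| k.
  apply: (partial_run_bound (b := #|OL|%:R) u_ge0); first by rewrite ler0n OL_le.
  have := alg3_partial_gain f_mono f_submod m_le early_prefix O s_full opt_ge0 not_full.
  by rewrite fO cardO -opt_ku.
have S_card : #|S| = k.
  by apply/eqP; rewrite eqn_leq S_full andbT card_alg3_run // cards0.
have [early_gain late_gain] := alg3_early_late_gains k m_le early_prefix f0 s_uniq.
rewrite -/S -/SL S_card in early_gain late_gain.
apply: (full_run_bound u_ge0 _ early_gain late_gain alpha_SL).
by rewrite ler0n -S_card ler_nat subset_leq_card // early_part_sub.
Qed.
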